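(* Let $T>0$ and let $f$ be a Lipschitz function on $\mathcal D=[0,1]^2$ with $f(0,0)=f(1,1)=0$. Let $u_N(t,x)=\mathbb{E}(f(x^t)\mid x^0=x)$ for the process $x^t$ described in the context (extended to all $x\in\mathcal D$ by interpolation in space). There exists a constant $C$ depending on the Lipschitz constant $\|f\|_{\mathrm{lip}}$ of $f$ and on $T$, but not on $N$, such that for all $x,y\in\mathcal D$ and $s,t\in[0,T]$, $$|u_N(t,x)-u_N(t,y)|\le C|x-y|,\qquad |u_N(t,x)-u_N(s,x)|\le C|t-s|^{1/2}.$$
   Context: Two patches have hosting capacities $N_1=N$ and $N_2=dN$, with $d=N_2/N_1\in(0,1]$ fixed; $\kappa>0$ fixed, $\delta t=1/N$, $\kappa\delta t\le 1$. Let $M=\begin{pmatrix} d & -d\\ -1 & 1\end{pmatrix}$ and $A=\mathrm{Id}-\frac{\kappa}{N}M$. For a function $g$ on $\mathcal D$ define $$B_N(g)(x)=\sum_{j_1=0}^{N_1}\sum_{j_2=0}^{N_2}\binom{N_1}{j_1}\binom{N_2}{j_2}x_1^{j_1}(1-x_1)^{N_1-j_1}x_2^{j_2}(1-x_2)^{N_2-j_2}\,g\!\left(\tfrac{j_1}{N_1},\tfrac{j_2}{N_2}\right).$$ $(x^n)_{n\ge0}$ is the Markov chain in $\mathcal D$ with transition kernel $\mathbb{E}(f(x^{n+1})\mid x^n=x)=B_N(f\circ A)(x)$, and $x^t$ is the continuous piecewise linear-in-time process with $x^t=x^n$ at $t=n\delta t$. *)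

From mathcomp Require Import all_boot all_order all_algebra.
From mathcomp Require Import reals.
Set Implicit Arguments. Unset Strict Implicit. Unset Printing Implicit Defensive.
Import Order.TTheory GRing.Theory Num.Theory.
Local Open Scope ring_scope.

Section Defs.
Variable R : realType.
Notation pt := (R * R)%type.

Definition inD (x : pt) : Prop := 0 <= x.1 <= 1 /\ 0 <= x.2 <= 1.

Definition dist2 (x y : pt) : R :=
  Num.sqrt ((x.1 - y.1) ^+ 2 + (x.2 - y.2) ^+ 2).

Definition lipschitz_on_D (f : pt -> R) (L : R) : Prop :=
  forall x y, inD x -> inD y -> `|f x - f y| <= L * dist2 x y.

Definition bern (n k : nat) (p : R) : R :=
  ('C(n, k))%:R * p ^+ k * (1 - p) ^+ (n - k).

(* B_N(g)(x) with N1, N2 the two capacities *)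
Definition BN (N1 N2 : nat) (g : pt -> R) (x : pt) : R :=
  \sum_(j1 < N1.+1) \sum_(j2 < N2.+1)
     bern N1 j1 x.1 * bern N2 j2 x.2 * g ((j1%:R / N1%:R), (j2%:R / N2%:R)).

(* A = Id - (kappa/N) M, M = [[d, -d], [-1, 1]] *)
Definition Amap (kappa d : R) (N : nat) (x : pt) : pt :=
  (x.1 - kappa / N%:R * (d * x.1 - d * x.2),
   x.2 - kappa / N%:R * (- x.1 + x.2)).

(* one-step transition operator: E(g(x^{n+1}) | x^n = x) = B_N(g o A)(x) *)
Definition Pstep (kappa d : R) (N1 N2 : nat) (g : pt -> R) : pt -> R :=
  BN N1 N2 (fun z => g (Amap kappa d N1 z)).

(* u_N(t,x) = E(f(x^t) | x^0 = x), where x^t = (1-th) x^n + th x^{n+1},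
   n = floor(t N), th = t N - n (dt = 1/N, N = N1). By the Markov property,
   u_N(t,x) = P^n h(x) with h(y) = E(f((1-th) y + th x^{1}) | x^0 = y). *)
Definition uN (kappa d : R) (N1 N2 : nat) (f : pt -> R) (t : R) (x : pt) : R :=
  let n := Num.truncn (t * N1%:R) in
  let th := t * N1%:R - n%:R in
  let h := fun y : pt =>
    BN N1 N2 (fun z => let w := Amap kappa d N1 z in
                       f ((1 - th) * y.1 + th * w.1, (1 - th) * y.2 + th * w.2)) y in
  iter n (Pstep kappa d N1 N2) h x.

End Defs.

(* The chain is driven by the operator [P g = B_N (g o A)], which is positive,
   linear and fixes constants, so every bound below propagates along iterates.

   Space: [A] has nonnegative entries and the weight [(1, d)] annihilates [M] on
   the left, so [A] contracts the weighted distance [|x1 - y1| + d |x2 - y2|];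
   the Bernstein operator does not increase Lipschitz constants along the grid,
   hence no power of [P] increases them.

   Time: for [Q_c(w) = (w1 - c1)^2 + d (w2 - c2)^2] one step adds a variance of
   at most [1/N] while [A] does not increase [Q], so after [k] steps the chain
   stays within [sqrt (2k/N)] of the deterministic orbit [A^k x] on average
   (Jensen), and this orbit moves by at most [2 kappa k / N]. With [k ~ N |t - s|]
   and [k / N <= T] both terms are [O(sqrt |t - s|)]; fractional time steps are
   handled by interpolating a single step. *)

From mathcomp Require Import all_boot all_order all_algebra.
From mathcomp Require Import reals ring lra.
Import Order.TTheory GRing.Theory Num.Theory.
Local Open Scope ring_scope.
Set Implicit Arguments. Unset Strict Implicit. Unset Printing Implicit Defensive.

Section Bernstein.
Variable R : realFieldType.
Implicit Types (h : nat -> R) (a b c p q : R).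

(* de Casteljau's recursion for [\sum_j bern N j p * h j], see [bernsteinE]. *)
Fixpoint bernstein (N : nat) h p : R :=
  if N is N'.+1 then p * bernstein N' (fun j => h j.+1) p + (1 - p) * bernstein N' h p
  else h 0%N.

Lemma eq_bernstein N h1 h2 p :
  (forall j, (j <= N)%N -> h1 j = h2 j) -> bernstein N h1 p = bernstein N h2 p.
Proof.
elim: N h1 h2 => [|N IH] h1 h2 eq12 /=; first exact: eq12.
rewrite (IH (fun j => h1 j.+1) (fun j => h2 j.+1)) => [|j lejN]; last exact: eq12.
by rewrite (IH h1 h2) // => j lejN; apply: eq12; apply: leqW.
Qed.

Lemma bernstein_affine N h1 h2 a b c p :
  bernstein N (fun j => a * h1 j + b * h2 j + c) p =
  a * bernstein N h1 p + b * bernstein N h2 p + c.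
Proof.
elim: N h1 h2 => [|N IH] h1 h2 //=.
by rewrite (IH (fun j => h1 j.+1) (fun j => h2 j.+1)) IH; ring.
Qed.

Lemma bernstein_const N c p : bernstein N (fun=> c) p = c.
Proof. by elim: N => [|N IH] //=; rewrite IH; ring. Qed.

Lemma bernsteinB N h1 h2 p :
  bernstein N (fun j => h1 j - h2 j) p = bernstein N h1 p - bernstein N h2 p.
Proof.
rewrite (eq_bernstein _ (h2 := fun j => 1 * h1 j + (-1) * h2 j + 0)) => [|j _].
  by rewrite bernstein_affine; ring.
by ring.
Qed.

Lemma ler_bernstein N h1 h2 p : 0 <= p <= 1 ->
  (forall j, (j <= N)%N -> h1 j <= h2 j) -> bernstein N h1 p <= bernstein N h2 p.
Proof.
move=> /andP[p_ge0 p_le1].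
elim: N h1 h2 => [|N IH] h1 h2 le12 /=; first exact: le12.
have q_ge0 : 0 <= 1 - p by lra.
apply: lerD; apply: ler_wpM2l => //; apply: IH => j lejN; apply: le12 => //.
exact: leqW.
Qed.

Lemma bernstein_norm_le N h p M : 0 <= p <= 1 ->
  (forall j, (j <= N)%N -> `|h j| <= M) -> `|bernstein N h p| <= M.
Proof.
move=> p01 hM; rewrite ler_norml.
rewrite -{1}(bernstein_const N (- M) p) -{2}(bernstein_const N M p).
by apply/andP; split; apply: ler_bernstein => // j /hM; rewrite ler_norml => /andP[].
Qed.

Lemma bernstein_lipschitz N h c p q : 0 <= p <= 1 -> 0 <= q <= 1 ->
  (forall j, (j < N)%N -> `|h j.+1 - h j| <= c) ->
  `|bernstein N h p - bernstein N h q| <= N%:R * c * `|p - q|.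
Proof.
move=> p01 q01; have /andP[p_ge0 p_le1] := p01.
elim: N h => [|N IH] h hc /=; first by rewrite subrr normr0 !mul0r.
have IH1 := IH (fun j => h j.+1) (fun j ltjN => hc j.+1 ltjN).
have IH0 := IH h (fun j ltjN => hc j (leqW ltjN)).
have step : `|bernstein N (fun j => h j.+1) q - bernstein N h q| <= c.
  by rewrite -bernsteinB; apply: bernstein_norm_le => // j; apply: hc.
have c_ge0 : 0 <= c := le_trans (normr_ge0 _) step.
move: IH1 IH0 step; set u1 := bernstein _ _ p; set v1 := bernstein _ _ q.
set u0 := bernstein _ _ p; set v0 := bernstein _ _ q => IH1 IH0 step.
have -> : p * u1 + (1 - p) * u0 - (q * v1 + (1 - q) * v0)
   = p * (u1 - v1) + (1 - p) * (u0 - v0) + (p - q) * (v1 - v0) by ring.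
have e1 := ler_wpM2l p_ge0 IH1.
have q_ge0 : 0 <= 1 - p by lra.
have e0 := ler_wpM2l q_ge0 IH0.
have e := ler_wpM2l (normr_ge0 (p - q)) step.
rewrite (le_trans (ler_normD _ _)) // (le_trans (lerD (ler_normD _ _) (lexx _))) //.
rewrite !normrM (ger0_norm p_ge0) (ger0_norm q_ge0) mulrSr.
set X := N%:R * c * `|p - q| in e1 e0.
have -> : (N%:R + 1) * c * `|p - q| = p * X + (1 - p) * X + `|p - q| * c by rewrite /X; ring.
by rewrite !lerD.
Qed.

Lemma bernstein_id N p : bernstein N (fun j => j%:R) p = N%:R * p.
Proof.
elim: N => [|N IH] /=; first by rewrite mul0r.
rewrite (eq_bernstein _ (h2 := fun j => 1 * j%:R + 0 * j%:R + 1)) => [|j _].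
  by rewrite bernstein_affine IH -natr1; ring.
by rewrite -natr1; ring.
Qed.

Lemma bernstein_sqr N p :
  bernstein N (fun j => j%:R ^+ 2) p = N%:R * p * (1 - p) + N%:R ^+ 2 * p ^+ 2.
Proof.
elim: N => [|N IH] /=; first by rewrite expr0n /= !mul0r add0r.
rewrite (eq_bernstein _ (h2 := fun j => 1 * j%:R ^+ 2 + 2 * j%:R + 1)) => [|j _].
  by rewrite bernstein_affine IH bernstein_id -natr1; ring.
by rewrite -natr1; ring.
Qed.

Lemma bernstein_quadratic N (g : R -> R) a b c p : (0 < N)%N ->
  (forall y, g y = a * y ^+ 2 + b * y + c) ->
  bernstein N (fun j => g (j%:R / N%:R)) p = g p + a * (p * (1 - p)) / N%:R.
Proof.
move=> N_gt0 gE; have N_neq0 : N%:R != 0 :> R by rewrite pnatr_eq0 -lt0n.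
rewrite (eq_bernstein _ (h2 := fun j =>
  (a / N%:R ^+ 2) * j%:R ^+ 2 + (b / N%:R) * j%:R + c)) => [|j _].
  by rewrite bernstein_affine bernstein_sqr bernstein_id gE; field.
by rewrite gE; field.
Qed.

End Bernstein.

Section BernsteinSum.
Variable R : realType.

Lemma bernsteinE N (h : nat -> R) p : bernstein N h p = \sum_(j < N.+1) bern N j p * h j.
Proof.
elim: N h => [|N IH] h /=.
  by rewrite big_ord_recl big_ord0 /bern /= bin0 !expr0 !mulr1 addr0 mul1r.
rewrite big_ord_recl !IH.
have E (j : 'I_N.+1) : bern N.+1 (bump 0 j) p * h (bump 0 j) = p * (bern N j p * h j.+1) +
    ('C(N, j.+1))%:R * p ^+ j.+1 * (1 - p) ^+ (N - j) * h j.+1.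
  by rewrite /bern /bump /= add1n binS subSS natrD exprS; ring.
rewrite (eq_bigr _ (fun j _ => E j)) big_split /= -mulr_sumr.
suff -> : (1 - p) * (\sum_(j < N.+1) bern N j p * h j) = bern N.+1 0 p * h 0%N +
    \sum_(j < N.+1) ('C(N, j.+1))%:R * p ^+ j.+1 * (1 - p) ^+ (N - j) * h j.+1.
  by ring.
rewrite [in RHS]big_ord_recr /= bin_small // !mul0r addr0 big_ord_recl mulrDr.
congr (_ + _); first by rewrite /bern !bin0 !subn0 /= !expr0 !mul1r exprS; ring.
rewrite mulr_sumr; apply: eq_bigr => j _; rewrite /bern (_ : lift ord0 j = j.+1 :> nat) //.
by rewrite -(subnSK (ltn_ord j)) [(1 - p) ^+ _.+1]exprS; ring.
Qed.

Lemma BN_bernstein N1 N2 (g : R * R -> R) x : BN N1 N2 g x =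
  bernstein N1 (fun j1 => bernstein N2 (fun j2 => g (j1%:R / N1%:R, j2%:R / N2%:R)) x.2) x.1.
Proof.
rewrite bernsteinE /BN; apply: eq_bigr => j1 _.
by rewrite bernsteinE mulr_sumr; apply: eq_bigr => j2 _; ring.
Qed.

End BernsteinSum.

Section MarkovOperator.
Variables (R : rcfType) (T : Type) (D : T -> Prop).
Implicit Types (P : (T -> R) -> T -> R) (g phi psi : T -> R).

Record markov_op P : Prop := MarkovOp {
  op_mono : forall g1 g2 x, D x -> (forall w, D w -> g1 w <= g2 w) -> P g1 x <= P g2 x;
  op_affine : forall g1 g2 a b c x, D x ->
    P (fun w => a * g1 w + b * g2 w + c) x = a * P g1 x + b * P g2 x + c }.

Section Theory.
Variables (P : (T -> R) -> T -> R) (HP : markov_op P).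

Lemma eq_op g1 g2 x : D x -> (forall w, D w -> g1 w = g2 w) -> P g1 x = P g2 x.
Proof.
move=> Dx eq12; apply/eqP; rewrite eq_le.
by apply/andP; split; apply: (op_mono HP) => // w Dw; rewrite eq12.
Qed.

Lemma op_lin g g1 g2 a b c x : D x ->
  (forall w, D w -> g w = a * g1 w + b * g2 w + c) -> P g x = a * P g1 x + b * P g2 x + c.
Proof. by move=> Dx gE; rewrite -(op_affine HP) //; apply: eq_op. Qed.

Lemma op_const c x : D x -> P (fun=> c) x = c.
Proof. by move=> Dx; rewrite (@op_lin _ (fun=> 0) (fun=> 0) 0 0 c) // => *; ring. Qed.

Lemma opB g1 g2 x : D x -> P (fun w => g1 w - g2 w) x = P g1 x - P g2 x.
Proof. by move=> Dx; rewrite (@op_lin _ g1 g2 1 (-1) 0) // => *; ring. Qed.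

Lemma opZ a g x : D x -> P (fun w => a * g w) x = a * P g x.
Proof. by move=> Dx; rewrite (@op_lin _ g g a 0 0) // => *; ring. Qed.

Lemma opDr g c x : D x -> P (fun w => g w + c) x = P g x + c.
Proof. by move=> Dx; rewrite (@op_lin _ g g 1 0 c) // => *; ring. Qed.

Lemma op_norm_le g M x : D x -> (forall w, D w -> `|g w| <= M) -> `|P g x| <= M.
Proof.
move=> Dx gM; rewrite ler_norml -{1}(op_const (- M) Dx) -{2}(op_const M Dx).
by apply/andP; split; apply: (op_mono HP) => // w /gM; rewrite ler_norml => /andP[].
Qed.

Lemma norm_op_le g x : D x -> `|P g x| <= P (fun w => `|g w|) x.
Proof.
move=> Dx; rewrite ler_norml; apply/andP; split; last first.
  by apply: (op_mono HP) => // w _; apply: ler_norm.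
rewrite lerNl -mulN1r -opZ //; apply: (op_mono HP) => // w _.
by rewrite mulN1r; have := ler_norm (- g w); rewrite normrN; lra.
Qed.

Lemma op_dev_le g (rho : T -> R) K x : D x -> 0 <= K ->
  (forall w, D w -> `|g w - g x| <= K * rho w) -> `|P g x - g x| <= K * P rho x.
Proof.
move=> Dx K_ge0 g_rho; rewrite -opDr // (le_trans (norm_op_le _ Dx)) //.
by rewrite -opZ //; apply: (op_mono HP).
Qed.

(* Jensen's inequality for the square root, via [phi <= phi^2 / (2e) + e / 2]. *)
Lemma op_sqrt_le phi psi v x : D x ->
  (forall w, D w -> phi w ^+ 2 <= psi w) -> P psi x <= v -> P phi x <= Num.sqrt v.
Proof.
move=> Dx phi_psi Ppsi.
have bound e : 0 < e -> P phi x <= v / (2 * e) + e / 2.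
  move=> e_gt0; have e2_gt0 : 0 < 2 * e by rewrite mulr_gt0.
  have le_mid : P phi x <= P (fun w => (1 / (2 * e)) * psi w + 0 * psi w + e / 2) x.
    apply: (op_mono HP) => // w Dw; rewrite -(ler_pM2l e2_gt0).
    have -> : 2 * e * (1 / (2 * e) * psi w + 0 * psi w + e / 2) = psi w + e ^+ 2.
      by field; rewrite gt_eqF.
    by have := sqr_ge0 (phi w - e); have := phi_psi w Dw; nra.
  rewrite (le_trans le_mid) // (op_affine HP) // mul0r addr0 lerD2r mul1r mulrC.
  by apply: ler_wpM2r; rewrite // invr_ge0 ltW.
have [v_gt0|v_le0] := ltP 0 v.
  have sv_gt0 : 0 < Num.sqrt v by rewrite sqrtr_gt0.
  rewrite (le_trans (bound _ sv_gt0)) // -{1}(sqr_sqrtr (ltW v_gt0)).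
  by rewrite le_eqVlt; apply/orP; left; apply/eqP; field; rewrite gt_eqF.
rewrite ler0_sqrtr //; apply/ler_addgt0Pr => e e_gt0; rewrite add0r.
rewrite (le_trans (bound _ e_gt0)) //.
have : v / (2 * e) <= 0 by rewrite pmulr_lle0 ?invr_gt0 ?mulr_gt0.
lra.
Qed.

End Theory.

Lemma markov_op_iter P k : markov_op P -> markov_op (iter k P).
Proof.
move=> HP; elim: k => [|k IH] /=; first by split=> // g1 g2 x Dx; apply.
split=> [g1 g2 x Dx le12 | g1 g2 a b c x Dx].
  by apply: (op_mono HP) => // w Dw; apply: (op_mono IH).
by apply: (op_lin HP) => // w Dw; apply: (op_affine IH).
Qed.

End MarkovOperator.

Section RealInequalities.
Variable R : realFieldType.

Lemma convex_itv01 (t u v : R) : 0 <= t <= 1 -> 0 <= u <= 1 -> 0 <= v <= 1 ->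
  0 <= (1 - t) * u + t * v <= 1.
Proof.
move=> /andP[t0 t1] /andP[u0 u1] /andP[v0 v1].
have h1 : 0 <= (1 - t) * u by rewrite mulr_ge0 // subr_ge0.
have h2 : 0 <= t * v by rewrite mulr_ge0.
have h3 : 0 <= (1 - t) * (1 - u) by rewrite mulr_ge0 // subr_ge0.
have h4 : 0 <= t * (1 - v) by rewrite mulr_ge0 // subr_ge0.
by apply/andP; split; nra.
Qed.

Lemma ler_norm_comb (u v p q : R) : 0 <= u -> 0 <= v ->
  `|u * p + v * q| <= u * `|p| + v * `|q|.
Proof.
move=> u0 v0; rewrite (le_trans (ler_normD _ _)) //.
by rewrite !normrM (ger0_norm u0) (ger0_norm v0).
Qed.

(* Bounds the variance of one step of the chain; the second coefficient is
   divided by [d] because the second patch has [N2 = d N1] individuals. *)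
Lemma variance_coef_le (a d p q : R) :
  0 <= a <= 1 -> 0 < d <= 1 -> 0 <= p <= 1 -> 0 <= q <= 1 ->
  ((1 - a * d) ^+ 2 + d * a ^+ 2) * (p * (1 - p)) +
  ((a * d) ^+ 2 + d * (1 - a) ^+ 2) / d * (q * (1 - q)) <= 1.
Proof.
move=> /andP[a0 a1] /andP[d0 d1] /andP[p0 p1] /andP[q0 q1].
have ad0 : 0 <= a * d by rewrite mulr_ge0 // ltW.
have ad1 : a * d <= 1 by rewrite mulr_ile1 // ltW.
have c1 : (1 - a * d) ^+ 2 + d * a ^+ 2 <= 2.
  have : (1 - a * d) ^+ 2 <= 1 by rewrite expr2 mulr_ile1 ?subr_ge0 //; lra.
  have : d * a ^+ 2 <= 1 by rewrite expr2 !mulr_ile1 ?mulr_ge0 // ltW.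
  lra.
have c2 : ((a * d) ^+ 2 + d * (1 - a) ^+ 2) / d <= 1.
  rewrite ler_pdivrMr // mul1r.
  have : a * d * (a * d) <= a * d * a by apply: ler_wpM2l; rewrite // -[leRHS]mulr1 ler_wpM2l.
  have : 0 <= d * a * (1 - a) by rewrite !mulr_ge0 ?subr_ge0 // ltW.
  rewrite !expr2; nra.
have var1 (x : R) : 0 <= x <= 1 -> 0 <= x * (1 - x) <= 1 / 4.
  move=> /andP[x0 x1]; rewrite mulr_ge0 ?subr_ge0 //=.
  by have := sqr_ge0 (x - 1 / 2); rewrite expr2; nra.
have /andP[vp0 vp1] : 0 <= p * (1 - p) <= 1 / 4 by apply: var1; rewrite p0 p1.
have /andP[vq0 vq1] : 0 <= q * (1 - q) <= 1 / 4 by apply: var1; rewrite q0 q1.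
have cp := ler_pM (addr_ge0 (sqr_ge0 _) (mulr_ge0 (ltW d0) (sqr_ge0 a))) vp0 c1 vp1.
have cq := ler_pM (divr_ge0 (addr_ge0 (sqr_ge0 _) (mulr_ge0 (ltW d0) (sqr_ge0 (1 - a))))
  (ltW d0)) vq0 c2 vq1.
lra.
Qed.

End RealInequalities.

Section Chain.
Variables (R : realType) (kappa d : R) (N1 N2 : nat).
Hypotheses (kappa_gt0 : 0 < kappa) (d_gt0 : 0 < d) (d_le1 : d <= 1).
Hypotheses (N1_gt0 : (0 < N1)%N) (N2E : N2%:R = d * N1%:R) (a_le1 : kappa / N1%:R <= 1).

Local Notation pt := (R * R)%type.
Local Notation a := (kappa / N1%:R).
Local Notation A := (Amap kappa d N1).
Local Notation P := (Pstep kappa d N1 N2).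
Local Notation grid j1 j2 := ((j1%:R / N1%:R : R), (j2%:R / N2%:R : R)).

Lemma N1r_gt0 : 0 < N1%:R :> R.
Proof. by rewrite ltr0n. Qed.

Lemma N2r_gt0 : 0 < N2%:R :> R.
Proof. by rewrite N2E mulr_gt0 // N1r_gt0. Qed.

Lemma a_ge0 : 0 <= a.
Proof. by rewrite divr_ge0 ?ler0n // ltW. Qed.

Lemma ad_itv : 0 <= a * d <= 1.
Proof.
have d0 := ltW d_gt0.
by rewrite mulr_ge0 ?a_ge0 //=; apply: mulr_ile1; rewrite ?a_ge0.
Qed.

Lemma inD_Amap w : inD w -> inD (A w).
Proof.
move=> [w1 w2].
split; rewrite /Amap /=.
- have -> : w.1 - a * (d * w.1 - d * w.2) = (1 - a * d) * w.1 + a * d * w.2 by ring.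
  exact: convex_itv01 ad_itv w1 w2.
- have -> : w.2 - a * (- w.1 + w.2) = (1 - a) * w.2 + a * w.1 by ring.
  by apply: convex_itv01 => //; rewrite a_ge0 a_le1.
Qed.

Lemma inD_grid (j1 j2 : nat) : (j1 <= N1)%N -> (j2 <= N2)%N -> inD (grid j1 j2).
Proof.
have [n1 n2] := (N1r_gt0, N2r_gt0).
by move=> le1 le2; split; rewrite /= divr_ge0 ?ler0n //= ler_pdivrMr // mul1r ler_nat.
Qed.

Lemma Pstep_bernstein g x :
  P g x = bernstein N1 (fun j1 => bernstein N2 (fun j2 => g (A (grid j1 j2))) x.2) x.1.
Proof. exact: BN_bernstein. Qed.

Lemma markov_Pstep : markov_op (@inD R) P.
Proof.
split=> [g1 g2 x [x1 x2] le12 | g1 g2 a' b c x _]; rewrite !Pstep_bernstein.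
  apply: ler_bernstein => // j1 le1; apply: ler_bernstein => // j2 le2.
  by apply: le12; apply/inD_Amap/inD_grid.
rewrite -bernstein_affine; apply: eq_bernstein => j1 _.
by rewrite -bernstein_affine.
Qed.

Lemma markov_iter k : markov_op (@inD R) (iter k P).
Proof. exact: markov_op_iter markov_Pstep. Qed.

Definition wdist (x y : pt) : R := `|x.1 - y.1| + d * `|x.2 - y.2|.

Definition wlipschitz (g : pt -> R) (K : R) : Prop :=
  forall x y, inD x -> inD y -> `|g x - g y| <= K * wdist x y.

Lemma wdist_triangle x y z : wdist x z <= wdist x y + wdist y z.
Proof.
have tri (u v w : R) : `|u - w| <= `|u - v| + `|v - w|.
  by rewrite (le_trans _ (ler_normD _ _)) // subrKA.
have := ler_wpM2l (ltW d_gt0) (tri x.2 y.2 z.2).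
by have := tri x.1 y.1 z.1; rewrite /wdist; lra.
Qed.

Lemma wdist_Amap x y : wdist (A x) (A y) <= wdist x y.
Proof.
have /andP[ad0 ad1] := ad_itv; have a0 := a_ge0.
have ad1' : 0 <= 1 - a * d by rewrite subr_ge0.
have a1' : 0 <= 1 - a by rewrite subr_ge0.
rewrite /wdist /Amap /=.
have -> : x.1 - a * (d * x.1 - d * x.2) - (y.1 - a * (d * y.1 - d * y.2))
    = (1 - a * d) * (x.1 - y.1) + a * d * (x.2 - y.2) by ring.
have -> : x.2 - a * (- x.1 + x.2) - (y.2 - a * (- y.1 + y.2))
    = a * (x.1 - y.1) + (1 - a) * (x.2 - y.2) by ring.
have h1 := ler_norm_comb (x.1 - y.1) (x.2 - y.2) ad1' ad0.
have h2 := ler_wpM2l (ltW d_gt0) (ler_norm_comb (x.1 - y.1) (x.2 - y.2) a0 a1').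
rewrite (le_trans (lerD h1 h2)) //.
by rewrite le_eqVlt; apply/orP; left; apply/eqP; ring.
Qed.

Lemma dist2_le_l1 (x y : pt) : dist2 x y <= `|x.1 - y.1| + `|x.2 - y.2|.
Proof.
rewrite /dist2 -[leRHS]ger0_norm ?addr_ge0 // -sqrtr_sqr; apply: ler_wsqrtr.
rewrite -(real_normK (num_real (x.1 - y.1))) -(real_normK (num_real (x.2 - y.2))).
by rewrite sqrrD addrAC lerDl mulrn_wge0 // mulr_ge0.
Qed.

Lemma wdist_le_dist2 x y : wdist x y <= 2 * dist2 x y.
Proof.
have le_dist (u v : R) : `|u| <= Num.sqrt (u ^+ 2 + v ^+ 2).
  by rewrite -sqrtr_sqr ler_wsqrtr // lerDl sqr_ge0.
have h1 := le_dist (x.1 - y.1) (x.2 - y.2).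
have := le_dist (x.2 - y.2) (x.1 - y.1); rewrite (addrC ((x.2 - y.2) ^+ 2)) => h2.
have := ler_wpM2r (normr_ge0 (x.2 - y.2)) d_le1; rewrite mul1r /wdist.
by move: h1 h2; rewrite -/(dist2 x y); lra.
Qed.

Lemma wlipschitz_lipschitz f L : 0 <= L -> lipschitz_on_D f L -> wlipschitz f (L / d).
Proof.
move=> L0 f_lip x y Dx Dy; rewrite (le_trans (f_lip x y Dx Dy)) // -mulrA.
apply: ler_wpM2l => //; rewrite (le_trans (dist2_le_l1 x y)) // ler_pdivlMl //.
have := ler_wpM2r (normr_ge0 (x.1 - y.1)) d_le1; rewrite mul1r /wdist.
by have := normr_ge0 (x.2 - y.2); lra.
Qed.

Lemma wdist_grid_succ1 (j1 j2 : nat) : wdist (grid j1.+1 j2) (grid j1 j2) = 1 / N1%:R.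
Proof.
rewrite /wdist /= subrr normr0 mulr0 addr0 -mulrBl -natrB // subSnn.
by rewrite ger0_norm // divr_ge0 ?ler0n.
Qed.

Lemma wdist_grid_succ2 (j1 j2 : nat) : wdist (grid j1 j2.+1) (grid j1 j2) = d / N2%:R.
Proof.
rewrite /wdist /= subrr normr0 add0r -mulrBl -natrB // subSnn.
by rewrite ger0_norm ?mulrA ?mulr1 // divr_ge0 ?ler0n.
Qed.

Lemma Pstep_wlipschitz g K : 0 <= K -> wlipschitz g K -> wlipschitz (P g) K.
Proof.
move=> K0 g_lip x y [x1 x2] [y1 y2]; rewrite !Pstep_bernstein.
have [n1 n2] := (N1r_gt0, N2r_gt0).
have g_grid j1 j2 j1' j2' : (j1 <= N1)%N -> (j2 <= N2)%N -> (j1' <= N1)%N -> (j2' <= N2)%N ->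
    `|g (A (grid j1 j2)) - g (A (grid j1' j2'))| <= K * wdist (grid j1 j2) (grid j1' j2').
  move=> *; rewrite (le_trans (g_lip _ _ _ _)) ?ler_wpM2l ?wdist_Amap //;
    exact/inD_Amap/inD_grid.
set F := fun (z : R) j1 => bernstein N2 (fun j2 => g (A (grid j1 j2))) z.
change (`|bernstein N1 (F x.2) x.1 - bernstein N1 (F y.2) y.1| <= K * wdist x y).
have step1 : `|bernstein N1 (F x.2) x.1 - bernstein N1 (F x.2) y.1| <= K * `|x.1 - y.1|.
  have -> : K = N1%:R * (K / N1%:R) by field; rewrite gt_eqF.
  apply: bernstein_lipschitz => // j lejN; rewrite /F -bernsteinB.
  apply: bernstein_norm_le => // j2 le2.
  by rewrite (le_trans (g_grid _ _ _ _ _ _ _ _)) ?wdist_grid_succ1 ?mul1r // ltnW.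
have step2 : `|bernstein N1 (F x.2) y.1 - bernstein N1 (F y.2) y.1| <= K * (d * `|x.2 - y.2|).
  rewrite -bernsteinB; apply: bernstein_norm_le => // j1 le1.
  have -> : K * (d * `|x.2 - y.2|) = N2%:R * (K * (d / N2%:R)) * `|x.2 - y.2|.
    by field; rewrite gt_eqF.
  apply: bernstein_lipschitz => // j lejN.
  by rewrite (le_trans (g_grid _ _ _ _ _ _ _ _)) ?wdist_grid_succ2 // ltnW.
rewrite /wdist mulrDr (le_trans _ (lerD step1 step2)) //.
by rewrite (le_trans _ (ler_normD _ _)) // subrKA.
Qed.

Lemma iter_wlipschitz k g K : 0 <= K -> wlipschitz g K -> wlipschitz (iter k P g) K.
Proof. by move=> K0 g_lip; elim: k => [|k IH] //=; apply: Pstep_wlipschitz. Qed.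

(* The quadratic form matching [wdist]: [diag(1, d) M] is symmetric, so [A] is
   self-adjoint for it. *)
Definition wsq (c w : pt) : R := (w.1 - c.1) ^+ 2 + d * (w.2 - c.2) ^+ 2.

Lemma Pstep_wsq c w : inD w -> P (wsq c) w <= wsq c (A w) + 1 / N1%:R.
Proof.
move=> [w1 w2]; have [n1 n2] := (N1r_gt0, N2r_gt0).
pose v1 := (1 - a * d) ^+ 2 + d * a ^+ 2.
pose v2 := (a * d) ^+ 2 + d * (1 - a) ^+ 2.
have inner y1 : bernstein N2 (fun j2 => wsq c (A (y1, j2%:R / N2%:R))) w.2 =
    wsq c (A (y1, w.2)) + v2 * (w.2 * (1 - w.2)) / N2%:R.
  apply: (bernstein_quadratic (g := fun y => wsq c (A (y1, y))) _ _
    (b := 2 * a * d * ((1 - a * d) * y1 - c.1) + 2 * d * (1 - a) * (a * y1 - c.2))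
    (c := ((1 - a * d) * y1 - c.1) ^+ 2 + d * (a * y1 - c.2) ^+ 2)).
    by rewrite -(ltr0n R).
  by move=> y; rewrite /wsq /Amap /v2 /=; ring.
rewrite Pstep_bernstein (eq_bernstein _ (fun j1 _ => inner _)).
rewrite (bernstein_quadratic (a := v1)
  (g := fun y => wsq c (A (y, w.2)) + v2 * (w.2 * (1 - w.2)) / N2%:R)
  (b := 2 * (1 - a * d) * (a * d * w.2 - c.1) + 2 * d * a * ((1 - a) * w.2 - c.2))
  (c := (a * d * w.2 - c.1) ^+ 2 + d * ((1 - a) * w.2 - c.2) ^+ 2 +
          v2 * (w.2 * (1 - w.2)) / N2%:R)) //; last first.
  by move=> y; rewrite /wsq /Amap /v1 /=; ring.
rewrite -surjective_pairing -addrA lerD2l N2E.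
have -> : v2 * (w.2 * (1 - w.2)) / (d * N1%:R) + v1 * (w.1 * (1 - w.1)) / N1%:R =
    (v1 * (w.1 * (1 - w.1)) + v2 / d * (w.2 * (1 - w.2))) / N1%:R.
  by field; rewrite !gt_eqF.
by rewrite ler_pM2r ?invr_gt0 //; apply: variance_coef_le; rewrite ?a_ge0 ?a_le1 ?d_gt0.
Qed.

Lemma wsq_Amap c w : wsq (A c) (A w) <= wsq c w.
Proof.
have a0 := a_ge0.
have -> : wsq c w = wsq (A c) (A w) +
    a * d * (2 - a * (1 + d)) * ((w.1 - c.1) - (w.2 - c.2)) ^+ 2.
  by rewrite /wsq /Amap /=; ring.
have d2 : 1 + d <= 2 by have := d_le1; lra.
rewrite lerDl mulr_ge0 ?sqr_ge0 //.
apply: mulr_ge0; first by rewrite mulr_ge0 // ltW.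
by have := ler_wpM2l a0 d2; have := a_le1; lra.
Qed.

Lemma iter_wsq k c z : inD z -> iter k P (wsq (iter k A c)) z <= wsq c z + k%:R / N1%:R.
Proof.
elim: k c z => [|k IH] c z Dz; first by rewrite /= mul0r addr0.
rewrite iterS iterSr.
have le1 : P (iter k P (wsq (iter k A (A c)))) z <= P (fun w => wsq (A c) w + k%:R / N1%:R) z.
  by apply: (op_mono markov_Pstep) => // w Dw; apply: IH.
rewrite (le_trans le1) // (opDr markov_Pstep) //.
rewrite (le_trans (lerD (Pstep_wsq _ Dz) (lexx _))) // -natr1 mulrDl.
by have := wsq_Amap c z; lra.
Qed.

Lemma wdist_sqr_le w c : wdist w c ^+ 2 <= 2 * wsq c w.
Proof.
rewrite /wdist /wsq -[(w.1 - c.1) ^+ 2]real_normK ?num_real //.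
rewrite -[(w.2 - c.2) ^+ 2]real_normK ?num_real //.
set u := `|_|; set v := `|_|.
have := mulr_ge0 (ltW d_gt0) (sqr_ge0 (u - v)).
have : 0 <= (1 - d) * (u ^+ 2 + d * v ^+ 2).
  by rewrite mulr_ge0 ?subr_ge0 // addr_ge0 ?sqr_ge0 // mulr_ge0 ?sqr_ge0 // ltW.
nra.
Qed.

Lemma wdist_Amap_self w : inD w -> wdist (A w) w <= 2 * a.
Proof.
move=> [/andP[w10 w11] /andP[w20 w21]]; have a0 := a_ge0; have d0 := ltW d_gt0.
rewrite /wdist /Amap /=.
have -> : w.1 - a * (d * w.1 - d * w.2) - w.1 = - (a * d) * (w.1 - w.2) by ring.
have -> : w.2 - a * (- w.1 + w.2) - w.2 = a * (w.1 - w.2) by ring.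
rewrite normrM normrN (ger0_norm (mulr_ge0 a0 d0)) normrM (ger0_norm a0).
have u1 : `|w.1 - w.2| <= 1 by rewrite ler_norml; lra.
have := ler_wpM2l a0 (ler_pM d0 (normr_ge0 _) d_le1 u1); rewrite mulr1.
set u := `|_|; have -> : a * d * u + d * (a * u) = 2 * (a * (d * u)) by ring.
lra.
Qed.

Lemma wdist_iter_Amap k x : inD x -> wdist (iter k A x) x <= 2 * a * k%:R.
Proof.
move=> Dx; elim: k => [|k IH]; first by rewrite /wdist !subrr normr0 mulr0 !addr0 mulr0.
rewrite (le_trans (wdist_triangle _ (iter k A x) _)) //.
have Dk : inD (iter k A x) by elim: (k) => [|j IHj] //=; apply: inD_Amap.
by rewrite [_ *+ k.+1]mulrSr mulrDr mulr1 addrC lerD // wdist_Amap_self.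
Qed.

Definition spread (r : R) : R := Num.sqrt (2 * r / N1%:R) + 2 * a * r.

Lemma iter_wdist k x : inD x -> iter k P (wdist^~ x) x <= spread k%:R.
Proof.
move=> Dx; have HPk := markov_iter k; set c := iter k A x.
have le1 : iter k P (wdist^~ x) x <= iter k P (fun w => wdist w c + wdist c x) x.
  by apply: (op_mono HPk) => // w _; apply: wdist_triangle.
rewrite (le_trans le1) // (opDr HPk) //; apply: lerD; last exact: wdist_iter_Amap.
apply: (op_sqrt_le HPk (psi := fun w => 2 * wsq c w)) => //; first by move=> w _; apply: wdist_sqr_le.
rewrite (opZ HPk) // -mulrA; apply: ler_wpM2l => //.
have wsq_xx : wsq x x = 0 by rewrite /wsq !subrr expr0n /= mulr0 addr0.
by have := iter_wsq k x Dx; rewrite wsq_xx add0r.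
Qed.

Definition lerp (th : R) (y w : pt) : pt :=
  ((1 - th) * y.1 + th * w.1, (1 - th) * y.2 + th * w.2).

(* [Pfrac th f y] is [E(f((1 - th) y + th x^1) | x^0 = y)]: the step of the
   time-interpolated process after a fraction [th] of a time step. *)
Definition Pfrac (th : R) (f : pt -> R) : pt -> R := fun y => P (fun w => f (lerp th y w)) y.

Lemma uN_iter f t x : uN kappa d N1 N2 f t x =
  iter (Num.truncn (t * N1%:R)) P (Pfrac (t * N1%:R - (Num.truncn (t * N1%:R))%:R) f) x.
Proof. by []. Qed.

Lemma inD_lerp th y w : 0 <= th <= 1 -> inD y -> inD w -> inD (lerp th y w).
Proof. by move=> th01 [y1 y2] [w1 w2]; split; apply: convex_itv01. Qed.

Lemma wdist_lerp th th' y w : wdist (lerp th y w) (lerp th' y w) = `|th - th'| * wdist w y.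
Proof.
rewrite /wdist /lerp /=.
have E (u v : R) : (1 - th) * u + th * v - ((1 - th') * u + th' * v) = (th - th') * (v - u).
  by ring.
by rewrite !E !normrM; ring.
Qed.

Lemma wdist_lerp2 th y y' w w' : 0 <= th <= 1 ->
  wdist (lerp th y w) (lerp th y' w') <= (1 - th) * wdist y y' + th * wdist w w'.
Proof.
move=> /andP[th0 th1]; have th0' : 0 <= 1 - th by rewrite subr_ge0.
rewrite /wdist /lerp /=.
have E (u u' v v' : R) :
  (1 - th) * u + th * v - ((1 - th) * u' + th * v') = (1 - th) * (u - u') + th * (v - v').
  by ring.
rewrite !E (le_trans (lerD (ler_norm_comb _ _ th0' th0)
  (ler_wpM2l (ltW d_gt0) (ler_norm_comb _ _ th0' th0)))) //.
by rewrite le_eqVlt; apply/orP; left; apply/eqP; ring.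
Qed.

Lemma Pfrac_wlipschitz f K th : 0 <= K -> 0 <= th <= 1 ->
  wlipschitz f K -> wlipschitz (Pfrac th f) K.
Proof.
move=> K0 th01 f_lip y y' Dy Dy'; have /andP[th0 th1] := th01.
have lip_w : wlipschitz (fun w => f (lerp th y w)) (K * th).
  move=> w w' Dw Dw'; apply: le_trans (f_lip _ _ (inD_lerp th01 Dy Dw) (inD_lerp th01 Dy Dw')) _.
  rewrite -mulrA; apply: ler_wpM2l => //.
  by have := wdist_lerp2 y y w w' th01; rewrite {2}/wdist !subrr normr0 mulr0 addr0 mulr0 add0r.
have step_w : `|Pfrac th f y - P (fun w => f (lerp th y w)) y'| <= K * th * wdist y y'.
  exact: Pstep_wlipschitz (mulr_ge0 K0 th0) lip_w _ _ Dy Dy'.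
have step_y : `|P (fun w => f (lerp th y w)) y' - Pfrac th f y'| <= K * (1 - th) * wdist y y'.
  rewrite /Pfrac -(opB markov_Pstep) //; apply: (op_norm_le markov_Pstep) => // w Dw.
  apply: le_trans (f_lip _ _ (inD_lerp th01 Dy Dw) (inD_lerp th01 Dy' Dw)) _.
  rewrite -mulrA; apply: ler_wpM2l => //.
  by have := wdist_lerp2 y y' w w th01; rewrite [wdist w w]/wdist !subrr normr0 mulr0 addr0 mulr0 addr0.
have -> : K * wdist y y' = K * th * wdist y y' + K * (1 - th) * wdist y y' by ring.
by rewrite (le_trans _ (lerD step_w step_y)) // (le_trans _ (ler_normD _ _)) // subrKA.
Qed.

Lemma Pfrac0 f y : inD y -> Pfrac 0 f y = f y.
Proof.
move=> Dy; rewrite /Pfrac -[RHS](op_const markov_Pstep _ Dy).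
by apply: (eq_op markov_Pstep) => // w _; rewrite /lerp subr0 !mul1r !mul0r !addr0 -surjective_pairing.
Qed.

Lemma Pfrac1 f y : inD y -> Pfrac 1 f y = P f y.
Proof.
move=> Dy; apply: (eq_op markov_Pstep) => // w _.
by rewrite /lerp subrr !mul0r !mul1r !add0r -surjective_pairing.
Qed.

Lemma spread_scale q : 0 <= q <= 1 -> q * spread 1 <= spread q.
Proof.
move=> /andP[q0 q1]; rewrite /spread mulrDr (_ : q * (2 * a * 1) = 2 * a * q) ?lerD2r;
  last by ring.
rewrite -{1}(ger0_norm q0) -sqrtr_sqr -sqrtrM ?sqr_ge0 //; apply: ler_wsqrtr.
rewrite mulr1 !mulrA; apply: ler_wpM2r; first by rewrite invr_ge0 ler0n.
by rewrite expr2; nra.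
Qed.

Lemma spread_le r tau T : 0 <= r <= N1%:R * tau -> 0 <= tau <= T ->
  spread r <= (2 + 2 * kappa * Num.sqrt T) * Num.sqrt tau.
Proof.
move=> /andP[r0 r_le] /andP[tau0 tauT]; have n1 := N1r_gt0.
have r_tau : r / N1%:R <= tau by rewrite ler_pdivrMr // mulrC.
rewrite /spread [leRHS]mulrDl; apply: lerD.
  rewrite -[2 in leRHS](@ger0_norm _ 2) // -sqrtr_sqr -sqrtrM ?sqr_ge0 //.
  by apply: ler_wsqrtr; rewrite -mulrA expr2 -mulrA ler_wpM2l //; lra.
have tau_sqrt : tau <= Num.sqrt T * Num.sqrt tau.
  rewrite -{1}(sqr_sqrtr tau0) expr2 ler_wpM2r ?sqrtr_ge0 //.
  exact: ler_wsqrtr.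
rewrite -!mulrA; apply: ler_wpM2l => //; apply: ler_wpM2l.
  by rewrite ltW.
by rewrite mulrC (le_trans r_tau).
Qed.

Lemma Pfrac_dev f K th th' y : 0 <= K -> 0 <= th' <= th -> th <= 1 ->
  wlipschitz f K -> inD y -> `|Pfrac th f y - Pfrac th' f y| <= K * spread (th - th').
Proof.
move=> K0 /andP[th0' th'_le] th1 f_lip Dy.
have th01 : 0 <= th <= 1 by rewrite th1 (le_trans th0').
have th01' : 0 <= th' <= 1 by rewrite th0' (le_trans th'_le).
rewrite /Pfrac -(opB markov_Pstep) // (le_trans (norm_op_le markov_Pstep _ Dy)) //.
have le1 : P (fun w => `|f (lerp th y w) - f (lerp th' y w)|) y <=
    P (fun w => (K * (th - th')) * wdist w y) y.
  apply: (op_mono markov_Pstep) => // w Dw.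
  rewrite (le_trans (f_lip _ _ (inD_lerp th01 Dy Dw) (inD_lerp th01' Dy Dw))) //.
  by rewrite wdist_lerp mulrA ger0_norm // subr_ge0.
rewrite (le_trans le1) // (opZ markov_Pstep) // -mulrA; apply: ler_wpM2l => //.
rewrite (le_trans _ (spread_scale _)) ?subr_ge0 ?th'_le //=; last by lra.
by apply: ler_wpM2l; [rewrite subr_ge0 | exact: (iter_wdist 1 Dy)].
Qed.

(* Comparing [m] whole steps started at fraction [th] with a single step at
   fraction [th']: for [m > 0] go through [f] and [P f], so that every piece is
   controlled by a spread of at most [m + th - th'] steps. *)
Lemma iter_Pfrac_dev f K m th th' B w : 0 <= K -> wlipschitz f K -> inD w ->
  0 <= th <= 1 -> 0 <= th' <= 1 -> 0 <= m%:R + th - th' ->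
  (forall r, 0 <= r <= m%:R + th - th' -> spread r <= B) ->
  `|iter m P (Pfrac th f) w - Pfrac th' f w| <= 3 * K * B.
Proof.
move=> K0 f_lip Dw /andP[th0 th1] /andP[th0' th1'] gap0 spreadB.
have B0 : 0 <= B.
  by rewrite (le_trans _ (spreadB 0 _)) ?lexx ?gap0 // /spread !mulr0 mul0r sqrtr0 addr0.
have KB : K * B <= 3 * K * B by rewrite -mulrA; have := mulr_ge0 K0 B0; lra.
case: m gap0 spreadB => [|m] gap0 spreadB /=.
  rewrite mulr0n add0r in gap0 spreadB; rewrite (le_trans _ KB) //.
  have th'_th : 0 <= th' <= th by rewrite th0' -subr_ge0.
  rewrite (le_trans (Pfrac_dev K0 th'_th th1 f_lip Dw)) //.
  by apply: ler_wpM2l => //; apply: spreadB; rewrite gap0 lexx.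
have m0 := ler0n R m; rewrite -natr1 in gap0 spreadB.
have t1 : `|iter m.+1 P (fun v => Pfrac th f v - f v) w| <= K * B.
  apply: (op_norm_le (markov_iter m.+1)) => // v Dv.
  have th_0 : (0 : R) <= 0 <= th by rewrite lexx th0.
  rewrite -[f v](Pfrac0 f Dv) (le_trans (Pfrac_dev K0 th_0 th1 f_lip Dv)) //.
  by apply: ler_wpM2l => //; apply: spreadB; apply/andP; split; lra.
have t2 : `|iter m P (P f) w - P f w| <= K * B.
  rewrite (le_trans (op_dev_le (markov_iter m) (rho := wdist^~ w) Dw K0 _)) //.
    by move=> v Dv; apply: Pstep_wlipschitz.
  apply: ler_wpM2l => //; rewrite (le_trans (iter_wdist m Dw)) // spreadB //.
  by apply/andP; split; lra.
have t3 : `|P f w - Pfrac th' f w| <= K * B.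
  have th'_1 : 0 <= th' <= 1 by rewrite th0' th1'.
  rewrite -(Pfrac1 f Dw) (le_trans (Pfrac_dev K0 th'_1 (lexx 1) f_lip Dw)) //.
  by apply: ler_wpM2l => //; apply: spreadB; apply/andP; split; lra.
have -> : iter m.+1 P (Pfrac th f) w - Pfrac th' f w =
    iter m.+1 P (fun v => Pfrac th f v - f v) w + (iter m P (P f) w - P f w) +
    (P f w - Pfrac th' f w).
  by rewrite (opB (markov_iter m.+1)) // [iter m.+1 P f]iterSr; ring.
rewrite (le_trans (ler_normD _ _)) // (le_trans (lerD (ler_normD _ _) (lexx _))) //.
by move: t1 t2 t3 KB; lra.
Qed.

Lemma uN_space f K t x y : 0 <= K -> wlipschitz f K -> 0 <= t -> inD x -> inD y ->
  `|uN kappa d N1 N2 f t x - uN kappa d N1 N2 f t y| <= K * wdist x y.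
Proof.
move=> K0 f_lip t0 Dx Dy; rewrite !uN_iter.
have /andP[n_le n_gt] := truncn_itv (mulr_ge0 t0 (ler0n R N1)).
apply: iter_wlipschitz => //; apply: Pfrac_wlipschitz => //.
by rewrite -natr1 in n_gt; apply/andP; split; lra.
Qed.

Lemma uN_time f K T s t x : 0 <= K -> wlipschitz f K -> inD x -> 0 <= s <= t -> t <= T ->
  `|uN kappa d N1 N2 f t x - uN kappa d N1 N2 f s x| <=
  3 * K * ((2 + 2 * kappa * Num.sqrt T) * Num.sqrt (t - s)).
Proof.
move=> K0 f_lip Dx /andP[s0 st] tT; rewrite !uN_iter; have n1 := N1r_gt0.
have sN0 : 0 <= s * N1%:R by rewrite mulr_ge0 ?ler0n.
have tN0 : 0 <= t * N1%:R by rewrite mulr_ge0 ?ler0n // (le_trans s0 st).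
have /andP[ns_le ns_gt] := truncn_itv sN0; have /andP[nt_le nt_gt] := truncn_itv tN0.
rewrite -natr1 in ns_gt nt_gt.
have le_n : (Num.truncn (s * N1%:R) <= Num.truncn (t * N1%:R))%N.
  by apply: le_truncn; rewrite ler_wpM2r ?ler0n.
set ns := Num.truncn _ in ns_le ns_gt le_n *; set nt := Num.truncn _ in nt_le nt_gt le_n *.
have gapE : (nt - ns)%:R + (t * N1%:R - nt%:R) - (s * N1%:R - ns%:R) = N1%:R * (t - s).
  by rewrite natrB //; ring.
rewrite -{1}(subnKC le_n) iterD -(opB (markov_iter ns)) //.
apply: (op_norm_le (markov_iter ns)) => // w Dw.
apply: iter_Pfrac_dev => //; rewrite ?gapE.
- by apply/andP; split; lra.
- by apply/andP; split; lra.
- by rewrite mulr_ge0 ?ler0n ?subr_ge0.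
- by move=> r r_itv; apply: spread_le r_itv _; rewrite subr_ge0 st /=; lra.
Qed.

End Chain.

Theorem lemma3 (R : realType) (kappa d T L : R) :
  0 < kappa -> 0 < d -> d <= 1 -> 0 < T -> 0 <= L ->
  exists C : R,
    forall (N1 N2 : nat) (f : R * R -> R),
      (0 < N1)%N ->
      N2%:R = d * N1%:R ->
      kappa / N1%:R <= 1 ->
      lipschitz_on_D f L ->
      f (0, 0) = 0 -> f (1, 1) = 0 ->
      forall (x y : R * R) (s t : R),
        inD x -> inD y -> 0 <= s <= T -> 0 <= t <= T ->
        `|uN kappa d N1 N2 f t x - uN kappa d N1 N2 f t y| <= C * dist2 x y /\
        `|uN kappa d N1 N2 f t x - uN kappa d N1 N2 f s x| <= C * Num.sqrt `|t - s|.
Proof.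
move=> kappa_gt0 d_gt0 d_le1 _ L_ge0; set K := L / d.
have K_ge0 : 0 <= K by rewrite divr_ge0 // ltW.
exists (3 * K * (2 + 2 * kappa * Num.sqrt T)).
move=> N1 N2 f N1_gt0 N2E a_le1 f_lip _ _ x y s t Dx Dy /andP[s0 sT] /andP[t0 tT].
have f_wlip := wlipschitz_lipschitz d_gt0 d_le1 L_ge0 f_lip.
have time_bound := uN_time kappa_gt0 d_gt0 d_le1 N1_gt0 N2E a_le1 K_ge0 f_wlip Dx.
split.
- rewrite (le_trans (uN_space kappa_gt0 d_gt0 d_le1 N1_gt0 N2E a_le1 K_ge0 f_wlip t0 Dx Dy)) //.
  rewrite (le_trans (ler_wpM2l K_ge0 (wdist_le_dist2 d_le1 x y))) // mulrA.
  apply: ler_wpM2r; first exact: sqrtr_ge0.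
  rewrite [3 * K]mulrC -[K * 3 * _]mulrA; apply: ler_wpM2l => //.
  by have := mulr_ge0 (ltW kappa_gt0) (sqrtr_ge0 T); lra.
- have [le_st|lt_ts] := leP s t.
    by rewrite [`|t - s|]ger0_norm ?subr_ge0 // -mulrA time_bound ?s0.
  rewrite distrC [`|t - s|]distrC [`|s - t|]ger0_norm ?subr_ge0 ?(ltW lt_ts) // -mulrA.
  by rewrite time_bound ?t0 ?(ltW lt_ts).
Qed.
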